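(* Let $0<q<1$ and write $z=a+\sqrt{-1}\,b$ with $a,b\in\mathbb{R}$. There exist positive constants $c_1=c_1(q)$, $c_2=c_2(q)$ such that: (i) if $a\le-1$, then $|(z;q)_\infty|\ge c_1\exp[c_2\log^2|a|]$; (ii) if $a<1$ and $|b|>1$, then $|(z;q)_\infty|\ge c_1\exp[c_2\log^2|b|]$; (iii) if $a>1$, then $|(z;q)_\infty|\ge c_1\,\max\big(b^2,\,(q^{\alpha-1}-1)(1-q^{\alpha})\big)\exp[c_2\log^2|a|]$, where $\alpha=\lceil\log_{q^{-1}}a\rceil-\log_{q^{-1}}a\in[0,1)$.
   Context: $(z;q)_\infty=\prod_{j\ge0}(1-zq^j)$; $\lceil x\rceil$ is the smallest integer $\ge x$. *)

From Stdlib Require Import Reals.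
From Coquelicot Require Import Coquelicot.
Open Scope R_scope.

Fixpoint qpoch_partial (z : C) (q : R) (n : nat) : C :=
  match n with
  | O => RtoC 1
  | S m => Cmult (qpoch_partial z q m) (Cminus (RtoC 1) (Cmult z (RtoC (q ^ m))))
  end.

Definition is_qpoch (z : C) (q : R) (P : C) : Prop :=
  filterlim (qpoch_partial z q) eventually (locally P).

(* ceiling: smallest integer >= x  (Int_part is the floor). *)
Definition Rceil (x : R) : R := - IZR (Int_part (- x)).

Definition logb (c x : R) : R := ln x / ln c.

(* Every factor satisfies |1 - z t| >= max(|1 - a t|, |b| t), and a lower
   bound valid for all long partial products passes to the limit.  Two
   estimates on real products drive the proof:
   - Gaussian growth: if y q^n < 1 then prod_{j<n} max(1, y q^j) is at
     least exp(c log^2 y) with c = 1/(2 log(1/q)) (induction on n, dividing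
     y by 1/q at each step);
   - Euler's bound: prod_{i<m} (1 - q^(i+1)) >= Q := exp(-q/(1-q)^2) for all
     m, from 1 - x >= exp(-x/(1-x)).
   The three regimes of the theorem are then proved separately:
   a <= -1 (all factors exceed max(1, |a| q^j)); a < 1, |b| > 1 (the factors
   exceed max(1, |b| q^j)(1 - q^j)); a > 1, where with t = a q^m the unique
   value in (1, 1/q], the factors j < m behave like the left case up to
   Euler-type losses, the factors j = m, m+1 produce max(b^2, (t-1)(1-qt)),
   and the tail j >= m+2 is bounded by Euler's constant.  Finally the
   ceiling in the statement is identified with this m, and the polynomial
   losses in a are absorbed by halving the constant c. *)

From Stdlib Require Import Reals Lra Lia ZArith.
From Coquelicot Require Import Coquelicot.
Open Scope R_scope.

Lemma exp_le_mono x y : x <= y -> exp x <= exp y.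
Proof.
  intros [Hlt | ->]; [left; now apply exp_increasing | lra].
Qed.

Lemma ln_nonneg y : 1 <= y -> 0 <= ln y.
Proof. intros Hy; rewrite <- ln_1; now apply ln_le; [lra|]. Qed.

Lemma pow_le1 x n : 0 <= x <= 1 -> x ^ n <= 1.
Proof. intros Hx; rewrite <- (pow1 n); apply pow_incr; lra. Qed.

Fixpoint prodR (g : nat -> R) (n : nat) : R :=
  match n with O => 1 | S m => prodR g m * g m end.

Lemma prodR_ext g h n :
  (forall j, (j < n)%nat -> g j = h j) -> prodR g n = prodR h n.
Proof.
  induction n as [|n IH]; intros Hgh; simpl; [reflexivity|].
  rewrite IH by (intros; apply Hgh; lia); rewrite Hgh by lia; reflexivity.
Qed.

Lemma prodR_add g m n :
  prodR g (m + n) = prodR g m * prodR (fun j => g (m + j)%nat) n.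
Proof.
  induction n as [|n IH]; simpl; [rewrite Nat.add_0_r; ring|].
  rewrite Nat.add_succ_r; simpl; rewrite IH; ring.
Qed.

Lemma prodR_shift g n : prodR g (S n) = g O * prodR (fun j => g (S j)) n.
Proof. change (S n) with (1 + n)%nat; rewrite prodR_add; simpl; ring. Qed.

Lemma prodR_mult g h n : prodR (fun j => g j * h j) n = prodR g n * prodR h n.
Proof. induction n as [|n IH]; simpl; [ring | rewrite IH; ring]. Qed.

Lemma prodR_le g h n :
  (forall j, (j < n)%nat -> 0 <= h j <= g j) -> 0 <= prodR h n <= prodR g n.
Proof.
  induction n as [|n IH]; intros Hhg; simpl; [lra|].
  destruct IH as [H0 Hle]; [intros; apply Hhg; lia|].
  destruct (Hhg n ltac:(lia)).
  split; [apply Rmult_le_pos | apply Rmult_le_compat]; auto.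
Qed.

Lemma prodR_rev q m :
  prodR (fun j => 1 - q ^ (m - j)) m = prodR (fun i => 1 - q ^ S i) m.
Proof.
  induction m as [|m IH]; [reflexivity|].
  rewrite prodR_shift, Nat.sub_0_r.
  change (prodR (fun j => 1 - q ^ (S m - S j)) m) with (prodR (fun j => 1 - q ^ (m - j)) m).
  rewrite IH; simpl; ring.
Qed.

Definition qfactor (z : C) (t : R) : R := Cmod (Cminus (RtoC 1) (Cmult z (RtoC t))).

Lemma qfactor_ge a b t : Rmax (Rabs (1 - a * t)) (Rabs (b * t)) <= qfactor (a, b) t.
Proof.
  unfold qfactor; eapply Rle_trans; [|apply Rmax_Cmod].
  unfold Cminus, Cmult, Cplus, Copp, RtoC; simpl.
  replace (1 + - (a * t - b * 0)) with (1 - a * t) by ring.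
  replace (0 + - (a * 0 + b * t)) with (- (b * t)) by ring.
  rewrite Rabs_Ropp; lra.
Qed.

Lemma qfactor_ge_re a b t : Rabs (1 - a * t) <= qfactor (a, b) t.
Proof. eapply Rle_trans; [apply Rmax_l | apply qfactor_ge]. Qed.

Lemma qfactor_ge_im a b t : 0 <= t -> Rabs b * t <= qfactor (a, b) t.
Proof.
  intros Ht; rewrite <- (Rabs_pos_eq t) at 1 by exact Ht; rewrite <- Rabs_mult.
  eapply Rle_trans; [apply Rmax_r | apply qfactor_ge].
Qed.

Lemma qpoch_lower_bound z q P L : is_qpoch z q P ->
  (exists N, forall n, (N <= n)%nat -> L <= prodR (fun j => qfactor z (q ^ j)) n) ->
  L <= Cmod P.
Proof.
  intros HP [N HN].
  assert (Hmod : forall n, Cmod (qpoch_partial z q n) = prodR (fun j => qfactor z (q ^ j)) n).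
  { induction n as [|n IH]; simpl; [apply Cmod_1 | rewrite Cmod_mult, IH; reflexivity]. }
  assert (Hlim : is_lim_seq (fun n => Cmod (qpoch_partial z q n)) (Cmod P)).
  { eapply filterlim_comp; [apply HP | apply (filterlim_norm (K := C_AbsRing) (V := C_NormedModule))]. }
  apply (is_lim_seq_le_loc (fun _ => L) (fun n => Cmod (qpoch_partial z q n)) L (Cmod P)); [|apply is_lim_seq_const | exact Hlim].
  exists N; intros n Hn; rewrite Hmod; now apply HN.
Qed.

(* One step of the Gaussian growth: shifting log y down by L costs at most
   a factor max(1, y), for the constant 1/(2L). *)
Lemma gaussian_step L u : 0 < L ->
  exp (/ (2 * L) * (Rmax 0 u) ^ 2) <= Rmax 1 (exp u) * exp (/ (2 * L) * (Rmax 0 (u - L)) ^ 2).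
Proof.
  intros HL.
  assert (Hk : / (2 * L) * L = 1 / 2) by (field; lra).
  assert (Hk0 : 0 < / (2 * L)) by (apply Rinv_0_lt_compat; lra).
  destruct (Rle_or_lt u 0) as [Hu | Hu].
  - rewrite (Rmax_left 0 u), (Rmax_left 0 (u - L)) by lra.
    replace (/ (2 * L) * 0 ^ 2) with 0 by ring; rewrite exp_0.
    pose proof (Rmax_l 1 (exp u)); lra.
  - rewrite (Rmax_right 0 u), Rmax_right by (try lra; rewrite <- exp_0; left; now apply exp_increasing).
    rewrite <- exp_plus; apply exp_le_mono.
    destruct (Rle_or_lt u L) as [HuL | HuL].
    + rewrite Rmax_left by lra.
      assert (/ (2 * L) * u <= 1 / 2) by (rewrite <- Hk; apply Rmult_le_compat_l; lra).
      nra.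
    + rewrite Rmax_right by lra.
      assert (0 <= / (2 * L) * L ^ 2) by (apply Rmult_le_pos; [lra | apply pow2_ge_0]).
      replace (u + / (2 * L) * (u - L) ^ 2)
        with (/ (2 * L) * u ^ 2 + u * (1 - 2 * (/ (2 * L) * L)) + / (2 * L) * L ^ 2) by ring.
      rewrite Hk; lra.
Qed.

(* Elementary bound behind Euler's estimate, from exp y >= 1 + y. *)
Lemma one_minus_ge_exp x : 0 <= x < 1 -> exp (- (x / (1 - x))) <= 1 - x.
Proof.
  intros Hx.
  assert (H := exp_ineq1_le (x / (1 - x))).
  replace (1 + x / (1 - x)) with (/ (1 - x)) in H by (field; lra).
  rewrite exp_Ropp; apply (Rle_trans _ (/ / (1 - x))); [|rewrite Rinv_inv; lra].
  apply Rinv_le_contravar; [apply Rinv_0_lt_compat; lra | exact H].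
Qed.

Section QPochhammerBounds.

Variable q : R.
Hypothesis hq0 : 0 < q.
Hypothesis hq1 : q < 1.

Lemma ln_q_neg : ln q < 0.
Proof. rewrite <- ln_1; apply ln_increasing; lra. Qed.

Lemma pow_q_bounds n : 0 < q ^ n <= 1.
Proof. split; [apply pow_lt | apply pow_le1]; lra. Qed.

Definition theta_const : R := / (2 * - ln q).

Lemma theta_const_pos : 0 < theta_const.
Proof. pose proof ln_q_neg; apply Rinv_0_lt_compat; lra. Qed.

Lemma theta_growth n y : 0 < y -> y * q ^ n < 1 ->
  exp (theta_const * (Rmax 0 (ln y)) ^ 2) <= prodR (fun j => Rmax 1 (y * q ^ j)) n.
Proof.
  pose proof ln_q_neg as Hlq.
  revert y; induction n as [|n IH]; intros y Hy Hyn.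
  - cbn [prodR]; rewrite pow_O, Rmult_1_r in Hyn.
    rewrite Rmax_left by (left; rewrite <- ln_1; now apply ln_increasing).
    replace (theta_const * 0 ^ 2) with 0 by ring; rewrite exp_0; lra.
  - rewrite prodR_shift, pow_O, Rmult_1_r.
    rewrite (prodR_ext _ (fun j => Rmax 1 ((y * q) * q ^ j))) by (intros; simpl; f_equal; ring).
    assert (Hrec := IH (y * q) ltac:(nra) ltac:(simpl in Hyn; lra)).
    rewrite ln_mult in Hrec by lra.
    replace (ln y + ln q) with (ln y - - ln q) in Hrec by ring.
    assert (Hstep := gaussian_step (- ln q) (ln y) ltac:(lra)).
    rewrite exp_ln in Hstep by lra.
    eapply Rle_trans; [exact Hstep|].
    apply Rmult_le_compat_l; [pose proof (Rmax_l 1 y); lra | exact Hrec].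
Qed.

Lemma theta_growth_ge1 n y : 1 <= y -> y * q ^ n < 1 ->
  exp (theta_const * (ln y) ^ 2) <= prodR (fun j => Rmax 1 (y * q ^ j)) n.
Proof.
  intros Hy Hyn; rewrite <- (Rmax_right 0 (ln y)) by now apply ln_nonneg.
  apply theta_growth; lra.
Qed.

Lemma theta_growth_eventually y : 1 <= y -> exists N, forall n, (N <= n)%nat ->
  exp (theta_const * (ln y) ^ 2) <= prodR (fun j => Rmax 1 (y * q ^ j)) n.
Proof.
  intros Hy.
  destruct (pow_lt_1_zero q ltac:(rewrite Rabs_pos_eq; lra) (/ y)
              ltac:(apply Rinv_0_lt_compat; lra)) as [N HN].
  exists N; intros n Hn; apply theta_growth_ge1; [exact Hy|].
  specialize (HN n Hn); rewrite Rabs_pos_eq in HN by (apply pow_le; lra).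
  apply (Rmult_lt_compat_l y) in HN; [|lra].
  rewrite Rinv_r in HN; lra.
Qed.

Definition euler_const : R := exp (- (q / (1 - q) ^ 2)).

Lemma euler_const_bounds : 0 < euler_const <= 1.
Proof.
  split; [apply exp_pos|]; unfold euler_const.
  apply (Rle_trans _ (exp 0)); [apply exp_le_mono | rewrite exp_0; lra].
  assert (0 < (1 - q) ^ 2) by (apply pow_lt; lra).
  assert (0 <= q / (1 - q) ^ 2) by (apply Rmult_le_pos; [lra | left; now apply Rinv_0_lt_compat]).
  lra.
Qed.

Lemma qq_partial_ge m :
  exp (- (q * (1 - q ^ m) / (1 - q) ^ 2)) <= prodR (fun i => 1 - q ^ S i) m.
Proof.
  induction m as [|m IH]; cbn [prodR].
  - replace (q * (1 - q ^ 0) / (1 - q) ^ 2) with 0 by (simpl; field; lra).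
    rewrite Ropp_0, exp_0; lra.
  - set (x := q ^ S m).
    assert (Hxm : x = q * q ^ m) by reflexivity.
    assert (Hx : 0 < x <= q) by (pose proof (pow_q_bounds m); nra).
    replace (- (q * (1 - x) / (1 - q) ^ 2))
      with (- (q * (1 - q ^ m) / (1 - q) ^ 2) + - (x / (1 - q))) by (rewrite Hxm; field; lra).
    rewrite exp_plus.
    assert (Hfac : exp (- (x / (1 - q))) <= 1 - x).
    { eapply Rle_trans; [|apply one_minus_ge_exp; lra].
      apply exp_le_mono, Ropp_le_contravar.
      apply Rmult_le_compat_l; [lra|].
      apply Rinv_le_contravar; lra. }
    apply Rmult_le_compat; try (left; apply exp_pos); assumption.
Qed.

Lemma euler_const_le m : euler_const <= prodR (fun i => 1 - q ^ S i) m.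
Proof.
  eapply Rle_trans; [|apply qq_partial_ge].
  apply exp_le_mono, Ropp_le_contravar.
  pose proof (pow_q_bounds m).
  unfold Rdiv; apply Rmult_le_compat_r.
  - left; apply Rinv_0_lt_compat, pow_lt; lra.
  - nra.
Qed.


(* Regime a <= -1: each factor is 1 + |a| q^j >= max(1, |a| q^j). *)
Lemma qpoch_lower_left a b P : is_qpoch (a, b) q P -> a <= -1 ->
  exp (theta_const * (ln (Rabs a)) ^ 2) <= Cmod P.
Proof.
  intros HP Ha; apply (qpoch_lower_bound _ _ _ _ HP).
  rewrite (Rabs_left a) by lra.
  destruct (theta_growth_eventually (- a)) as [N HN]; [lra|].
  exists N; intros n Hn; eapply Rle_trans; [apply HN, Hn|].
  apply prodR_le; intros j _; pose proof (pow_q_bounds j).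
  split; [pose proof (Rmax_l 1 (- a * q ^ j)); lra|].
  eapply Rle_trans; [|apply qfactor_ge_re].
  rewrite Rabs_pos_eq by nra; apply Rmax_lub; nra.
Qed.

Lemma qfactor_ge_upper a b j : a < 1 ->
  Rmax 1 (Rabs b * q ^ j) * (1 - q ^ j) <= qfactor (a, b) (q ^ j).
Proof.
  intros Ha; pose proof (pow_q_bounds j).
  destruct (Rle_or_lt (Rabs b * q ^ j) 1) as [Hb | Hb].
  - rewrite Rmax_left, Rmult_1_l by exact Hb.
    eapply Rle_trans; [|apply qfactor_ge_re].
    rewrite Rabs_pos_eq by nra; nra.
  - rewrite Rmax_right by lra.
    eapply Rle_trans; [|apply qfactor_ge_im; lra]; nra.
Qed.

(* Regime a < 1, |b| > 1: the factor j = 0 is at least |b|, the others are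
   controlled by qfactor_ge_upper and Euler's bound. *)
Lemma qpoch_lower_upper a b P : is_qpoch (a, b) q P -> a < 1 -> 1 < Rabs b ->
  euler_const * exp (theta_const * (ln (Rabs b)) ^ 2) <= Cmod P.
Proof.
  intros HP Ha Hb; apply (qpoch_lower_bound _ _ _ _ HP).
  destruct (theta_growth_eventually (Rabs b)) as [N HN]; [lra|].
  exists (S N); intros [|n] Hn; [lia|].
  set (G := fun j => Rmax 1 (Rabs b * q ^ j)).
  assert (HG : exp (theta_const * (ln (Rabs b)) ^ 2) <= G O * prodR (fun j => G (S j)) n)
    by (rewrite <- prodR_shift; apply HN; lia).
  assert (Hfirst : G O <= qfactor (a, b) (q ^ 0)).
  { unfold G; rewrite pow_O, Rmult_1_r, Rmax_right by lra.
    rewrite <- (Rmult_1_r (Rabs b)) at 1; apply qfactor_ge_im; lra. }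
  assert (Hrest : prodR (fun j => G (S j)) n * prodR (fun j => 1 - q ^ S j) n
                  <= prodR (fun j => qfactor (a, b) (q ^ S j)) n).
  { rewrite <- prodR_mult; apply prodR_le; intros j _.
    pose proof (pow_q_bounds (S j)); pose proof (Rmax_l 1 (Rabs b * q ^ S j)).
    unfold G; split; [nra | apply qfactor_ge_upper, Ha]. }
  assert (HGpos : 0 <= prodR (fun j => G (S j)) n).
  { apply (prodR_le (fun j => G (S j))); intros j _; unfold G.
    pose proof (Rmax_l 1 (Rabs b * q ^ S j)); lra. }
  pose proof (euler_const_le n); pose proof euler_const_bounds.
  rewrite prodR_shift.
  apply Rle_trans with (G O * (prodR (fun j => G (S j)) n * euler_const)).
  - rewrite Rmult_comm, <- Rmult_assoc; apply Rmult_le_compat_r; lra.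
  - apply Rmult_le_compat; unfold G in *; try nra.
    pose proof (Rmax_l 1 (Rabs b * q ^ 0)); lra.
Qed.

(* Regime a > 1, factors j < m where a q^m >= 1: since a q^j - 1 >=
   a q^j (1 - q^(m-j)), they lose at most Euler's constant against max(1, a q^j). *)
Lemma head_factors a b m : 1 <= a * q ^ m ->
  euler_const * prodR (fun j => Rmax 1 (a * q ^ j)) m
    <= prodR (fun j => qfactor (a, b) (q ^ j)) m.
Proof.
  intros Ht.
  assert (Ha : 0 < a) by (pose proof (pow_q_bounds m); nra).
  apply Rle_trans with (prodR (fun j => Rmax 1 (a * q ^ j) * (1 - q ^ (m - j))) m).
  - rewrite prodR_mult, prodR_rev, Rmult_comm.
    apply Rmult_le_compat_l; [|apply euler_const_le].
    apply (prodR_le (fun j => Rmax 1 (a * q ^ j))); intros j _.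
    pose proof (Rmax_l 1 (a * q ^ j)); lra.
  - apply prodR_le; intros j Hj.
    assert (Hsplit : q ^ m = q ^ j * q ^ (m - j)) by (rewrite <- pow_add; f_equal; lia).
    pose proof (pow_q_bounds j); pose proof (pow_q_bounds (m - j)).
    assert (Hj0 : 0 < a * q ^ j) by nra.
    assert (Haj : a * q ^ m <= a * q ^ j) by (rewrite Hsplit; nra).
    rewrite Rmax_right by lra.
    split; [nra|].
    eapply Rle_trans; [|apply qfactor_ge_re].
    rewrite Rabs_left1 by lra; rewrite Hsplit in Ht; nra.
Qed.

(* Factors beyond the point where a q^k <= q are at least 1 - q^(j+1). *)
Lemma tail_factors a b k r : 0 <= a -> a * q ^ k <= q ->
  euler_const <= prodR (fun j => qfactor (a, b) (q ^ (k + j))) r.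
Proof.
  intros Ha Hk; eapply Rle_trans; [apply (euler_const_le r)|].
  apply prodR_le; intros j _.
  pose proof (pow_q_bounds j); pose proof (pow_q_bounds (S j)).
  assert (Hakj : 0 <= a * q ^ (k + j) <= q ^ S j).
  { pose proof (pow_q_bounds k).
    assert (0 <= a * q ^ k) by nra.
    rewrite pow_add; change (q ^ S j) with (q * q ^ j); split; nra. }
  split; [lra|].
  eapply Rle_trans; [|apply qfactor_ge_re].
  rewrite Rabs_pos_eq; lra.
Qed.

Lemma middle_factors a b m : 1 <= a -> 1 <= a * q ^ m -> a * q ^ S m <= 1 ->
  q * (a * q ^ m) * Rmax (b ^ 2) ((a * q ^ m - 1) * (1 - a * q ^ S m)) / a ^ 2
    <= qfactor (a, b) (q ^ m) * qfactor (a, b) (q ^ S m).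
Proof.
  intros Ha Ht Hs.
  set (t := a * q ^ m) in *.
  assert (Hst : a * q ^ S m = q * t) by (unfold t; simpl; ring).
  rewrite Hst in *.
  pose proof (pow_q_bounds m).
  assert (Hre1 : t - 1 <= qfactor (a, b) (q ^ m)).
  { eapply Rle_trans; [|apply qfactor_ge_re]; fold t; rewrite Rabs_left1; lra. }
  assert (Hre2 : 1 - q * t <= qfactor (a, b) (q ^ S m)).
  { eapply Rle_trans; [|apply qfactor_ge_re]; rewrite Hst, Rabs_pos_eq; lra. }
  assert (Him : b ^ 2 * (q * t ^ 2) / a ^ 2 <= qfactor (a, b) (q ^ m) * qfactor (a, b) (q ^ S m)).
  { replace (b ^ 2 * (q * t ^ 2) / a ^ 2) with ((Rabs b * q ^ m) * (Rabs b * q ^ S m))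
      by (unfold t; rewrite <- pow2_abs; simpl; field; lra).
    apply Rmult_le_compat; try (apply Rmult_le_pos; [apply Rabs_pos | apply pow_le; lra]);
      apply qfactor_ge_im, pow_le; lra. }
  assert (Ha2 : 1 <= a ^ 2) by nra.
  assert (Hqt : 0 <= q * t <= 1) by nra.
  unfold Rdiv; rewrite Rmult_comm, <- Rmult_assoc.
  apply Rmax_case_strong; intros _.
  - eapply Rle_trans; [|exact Him].
    assert (0 <= b ^ 2) by apply pow2_ge_0.
    assert (0 <= / a ^ 2) by (left; apply Rinv_0_lt_compat; lra).
    assert (Hc : 0 <= / a ^ 2 * (q * t) * b ^ 2) by (apply Rmult_le_pos; [apply Rmult_le_pos|]; lra).
    replace (b ^ 2 * (q * t ^ 2) / a ^ 2) with (/ a ^ 2 * (q * t) * b ^ 2 * t) by (unfold Rdiv; ring).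
    rewrite <- (Rmult_1_r (/ a ^ 2 * (q * t) * b ^ 2)) at 1.
    apply Rmult_le_compat_l; lra.
  - assert (HM : 0 <= (t - 1) * (1 - q * t)) by (apply Rmult_le_pos; lra).
    assert (0 < / a ^ 2 <= 1) by (split; [apply Rinv_0_lt_compat | rewrite <- Rinv_1; apply Rinv_le_contravar]; lra).
    assert (0 <= / a ^ 2 * (q * t) <= 1) by (split; nra).
    apply Rle_trans with ((t - 1) * (1 - q * t)).
    { rewrite <- (Rmult_1_l ((t - 1) * (1 - q * t))) at 2; apply Rmult_le_compat_r; lra. }
    apply Rmult_le_compat; lra.
Qed.

Lemma qpoch_lower_right a b P m : is_qpoch (a, b) q P -> 1 < a -> q < a * q ^ S m <= 1 ->
  euler_const ^ 2 * q * Rmax (b ^ 2) ((a * q ^ m - 1) * (1 - a * q ^ S m))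
    * (exp (theta_const * (ln a) ^ 2) / a ^ 2) <= Cmod P.
Proof.
  intros HP Ha Hs; apply (qpoch_lower_bound _ _ _ _ HP).
  assert (Hst : a * q ^ S m = q * (a * q ^ m)) by (simpl; ring).
  assert (Ht : 1 <= a * q ^ m) by nra.
  set (W := Rmax (b ^ 2) ((a * q ^ m - 1) * (1 - a * q ^ S m))).
  set (E := exp (theta_const * (ln a) ^ 2)).
  set (PM := prodR (fun j => Rmax 1 (a * q ^ j)) m).
  assert (HW : 0 <= W) by (pose proof (pow2_ge_0 b); pose proof (Rmax_l (b ^ 2) ((a * q ^ m - 1) * (1 - a * q ^ S m))); unfold W; lra).
  assert (HPM : 0 <= PM) by (apply (prodR_le (fun j => Rmax 1 (a * q ^ j))); intros j _; pose proof (Rmax_l 1 (a * q ^ j)); lra).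
  assert (Hgrowth : E <= PM * (a * q ^ m)).
  { assert (HG := theta_growth_ge1 (S (S m)) a ltac:(lra)
                    ltac:(change (a * (q * q ^ S m) < 1); nra)).
    cbn [prodR] in HG; rewrite (Rmax_right 1 (a * q ^ m)), (Rmax_left 1 (a * q ^ S m)) in HG by lra.
    fold E PM in HG; lra. }
  assert (Hhead := head_factors a b m Ht).
  assert (Hmid := middle_factors a b m ltac:(lra) Ht (proj2 Hs)).
  exists (S (S m)); intros n Hn.
  replace n with (S (S m) + (n - S (S m)))%nat by lia.
  rewrite prodR_add; cbn [prodR].
  assert (Htail := tail_factors a b (S (S m)) (n - S (S m)) ltac:(lra)
                     ltac:(change (a * (q * q ^ S m) <= q); nra)).
  pose proof euler_const_bounds.
  assert (Ha2 : 0 < a ^ 2) by (apply pow_lt; lra).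
  apply Rle_trans with ((euler_const * PM) * (q * (a * q ^ m) * W / a ^ 2) * euler_const).
  - replace ((euler_const * PM) * (q * (a * q ^ m) * W / a ^ 2) * euler_const)
      with (euler_const ^ 2 * q * W * ((PM * (a * q ^ m)) / a ^ 2)) by (field; lra).
    apply Rmult_le_compat_l; [apply Rmult_le_pos; [nra | exact HW]|].
    unfold Rdiv; apply Rmult_le_compat_r; [left; now apply Rinv_0_lt_compat | exact Hgrowth].
  - assert (0 <= q * (a * q ^ m) * W / a ^ 2)
      by (unfold Rdiv; apply Rmult_le_pos; [apply Rmult_le_pos; nra | left; now apply Rinv_0_lt_compat]).
    assert (0 <= euler_const * PM) by (apply Rmult_le_pos; lra).
    apply Rmult_le_compat; [apply Rmult_le_pos; lra | lra | | exact Htail].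
    rewrite (Rmult_assoc (prodR _ m)).
    apply Rmult_le_compat; [lra | lra | exact Hhead | exact Hmid].
Qed.

(* The quantity alpha of the statement: q^alpha = a q^(m+1) and
   q^(alpha-1) = a q^m for k = m+1 = ceil(log_{1/q} a), and q < a q^(m+1) <= 1. *)
Lemma ceil_log_decomposition a : 1 < a -> exists m,
  let alpha := Rceil (logb (/ q) a) - logb (/ q) a in
  Rpower q alpha = a * q ^ S m /\ Rpower q (alpha - 1) = a * q ^ m /\ q < a * q ^ S m <= 1.
Proof.
  intros Ha; pose proof ln_q_neg as Hlq.
  assert (Hla : 0 < ln a) by (rewrite <- ln_1; apply ln_increasing; lra).
  set (x := logb (/ q) a).
  assert (Hx : ln a = - x * ln q) by (unfold x, logb; rewrite ln_Rinv by lra; field; lra).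
  assert (Hx0 : 0 < x) by (unfold x, logb; rewrite ln_Rinv by lra; apply Rdiv_lt_0_compat; lra).
  destruct (base_Int_part (- x)) as [Hfl1 Hfl2].
  set (K := Int_part (- x)) in *.
  assert (HK : (K < 0)%Z) by (apply lt_IZR; simpl; lra).
  set (k := Z.to_nat (- K)).
  assert (Hk : INR k = - IZR K) by (unfold k; rewrite INR_IZR_INZ, Z2Nat.id by lia; apply opp_IZR).
  exists (pred k); cbv zeta.
  replace (S (pred k)) with k by (unfold k; lia).
  assert (Halpha : Rceil x - x = INR k - x) by (unfold Rceil; fold K; rewrite Hk; ring).
  rewrite Halpha.
  assert (Hs : Rpower q (INR k - x) = a * q ^ k).
  { rewrite <- (Rpower_pow k q hq0); unfold Rpower.
    rewrite <- (exp_ln a) by lra; rewrite <- exp_plus, Hx; f_equal; ring. }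
  split; [exact Hs | split].
  - unfold Rpower in *.
    replace ((INR k - x - 1) * ln q) with ((INR k - x) * ln q + - ln q) by ring.
    rewrite exp_plus, Hs, exp_Ropp, exp_ln by lra.
    replace k with (S (pred k)) at 1 by (unfold k; lia); simpl; field; lra.
  - rewrite <- Hs; unfold Rpower; split.
    + rewrite <- (exp_ln q) at 1 by lra; apply exp_increasing; nra.
    + rewrite <- exp_0; apply exp_le_mono; nra.
Qed.

End QPochhammerBounds.

Lemma exp_half_square_le c u : 0 <= c -> exp (c / 2 * u ^ 2) <= exp (c * u ^ 2).
Proof. intros Hc; apply exp_le_mono; pose proof (pow2_ge_0 u); nra. Qed.

(* Halving the Gaussian constant absorbs the polynomial loss a^2 = exp(2 log a). *)
Lemma exp_square_absorb c u : 0 < c ->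
  exp (- 2 / c) * exp (c / 2 * u ^ 2) <= exp (c * u ^ 2) / exp u ^ 2.
Proof.
  intros Hc.
  replace (exp (c * u ^ 2) / exp u ^ 2) with (exp (c * u ^ 2 - 2 * u)).
  2:{ replace (c * u ^ 2 - 2 * u) with (c * u ^ 2 + - (u + u)) by ring.
      rewrite exp_plus, exp_Ropp, exp_plus; field; apply exp_neq_0. }
  rewrite <- exp_plus; apply exp_le_mono.
  assert (0 <= c / 2 * (u - 2 / c) ^ 2) by (apply Rmult_le_pos; [lra | apply pow2_ge_0]).
  replace (c * u ^ 2 - 2 * u) with (- 2 / c + c / 2 * u ^ 2 + c / 2 * (u - 2 / c) ^ 2) by (field; lra).
  lra.
Qed.

Theorem lemmaC1 (q : R) (hq0 : 0 < q) (hq1 : q < 1) :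
  exists c1 c2 : R, 0 < c1 /\ 0 < c2 /\
  forall (a b : R) (P : C), is_qpoch (a, b) q P ->
    (a <= -1 -> Cmod P >= c1 * exp (c2 * (ln (Rabs a)) ^ 2)) /\
    (a < 1 -> Rabs b > 1 -> Cmod P >= c1 * exp (c2 * (ln (Rabs b)) ^ 2)) /\
    (a > 1 ->
      let alpha := Rceil (logb (/ q) a) - logb (/ q) a in
      Cmod P >= c1 * Rmax (b ^ 2) ((Rpower q (alpha - 1) - 1) * (1 - Rpower q alpha))
                   * exp (c2 * (ln (Rabs a)) ^ 2)).
Proof.
  pose proof (theta_const_pos q hq0 hq1) as Hc.
  pose proof (euler_const_bounds q hq0 hq1) as HQ.
  set (c := theta_const q) in *; set (Q := euler_const q) in *.
  set (e := exp (- 2 / c)).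
  assert (He : 0 < e <= 1).
  { split; [apply exp_pos|]; rewrite <- exp_0; apply exp_le_mono.
    assert (0 < 2 / c) by (apply Rdiv_lt_0_compat; lra); lra. }
  assert (Hc1 : 0 < Q ^ 2 * q * e <= Q).
  { split; [apply Rmult_lt_0_compat; [apply Rmult_lt_0_compat; [apply pow_lt|]|]; lra|].
    assert (q * e <= 1) by nra; simpl; nra. }
  exists (Q ^ 2 * q * e), (c / 2); split; [lra | split; [lra|]].
  intros a b P HP; split; [|split].
  - intros Ha; apply Rle_ge.
    pose proof (qpoch_lower_left q hq0 hq1 a b P HP Ha) as Hleft; fold c in Hleft.
    pose proof (exp_half_square_le c (ln (Rabs a)) ltac:(lra)).
    pose proof (exp_pos (c / 2 * ln (Rabs a) ^ 2)).
    apply Rle_trans with (1 * exp (c * ln (Rabs a) ^ 2)); [apply Rmult_le_compat|]; lra.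
  - intros Ha Hb; apply Rle_ge.
    pose proof (qpoch_lower_upper q hq0 hq1 a b P HP Ha Hb) as Hupper; fold c Q in Hupper.
    pose proof (exp_half_square_le c (ln (Rabs b)) ltac:(lra)).
    pose proof (exp_pos (c / 2 * ln (Rabs b) ^ 2)).
    apply Rle_trans with (Q * exp (c * ln (Rabs b) ^ 2)); [apply Rmult_le_compat|]; lra.
  - intros Ha; apply Rle_ge.
    destruct (ceil_log_decomposition q hq0 hq1 a Ha) as [m [Hs [Ht Hbounds]]].
    rewrite Hs, Ht, Rabs_pos_eq by lra.
    set (W := Rmax (b ^ 2) _).
    assert (HW : 0 <= W) by (pose proof (pow2_ge_0 b); pose proof (Rmax_l (b ^ 2) ((a * q ^ m - 1) * (1 - a * q ^ S m))); unfold W; lra).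
    assert (Habsorb := exp_square_absorb c (ln a) Hc); rewrite exp_ln in Habsorb by lra.
    eapply Rle_trans; [|apply (qpoch_lower_right q hq0 hq1 a b P m HP Ha Hbounds)].
    fold c Q W.
    replace (Q ^ 2 * q * e * W * exp (c / 2 * ln a ^ 2))
      with (Q ^ 2 * q * W * (e * exp (c / 2 * ln a ^ 2))) by ring.
    apply Rmult_le_compat_l; [apply Rmult_le_pos; [nra | exact HW] | exact Habsorb].
Qed.
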